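(* Let $n\ge 2$, let $J\subseteq[n]$, let $i\in[n]\setminus J$ and $J'=J\cup\{i\}$. Let $D=D_{i,J}$ be the $\Omega_{J'}\times\Omega_J$ matrix with $D(v,u)=1$ if $v=\varphi_i(u)$ and $D(v,u)=0$ otherwise. Then \[ D_{i,J}M_J=M_{J'}D_{i,J}. \]
   Context: Type C TASEP. Fix $n\ge 2$. There are $2n$ sites: upper $U_1,\dots,U_n$ and lower $L_1,\dots,L_n$, with counter-clockwise successor $\mathrm{succ}(U_j)=U_{j-1}$ ($j\ge2$), $\mathrm{succ}(U_1)=L_1$, $\mathrm{succ}(L_j)=L_{j+1}$ ($j<n$), $\mathrm{succ}(L_n)=U_n$. A state places particles with positive integer classes on sites, at most one particle per column. Ringing the bell at site $s$: if $s$ holds particle $p$ and $s'=\mathrm{succ}(s)$ is empty, $p$ moves to $s'$; if $s'$ holds a particle of strictly larger class, they swap; otherwise nothing. $\sigma_0$ = bell at $U_1$; $\sigma_n$ = bell at $L_n$; for $0<j<n$, $\sigma_j$ = bells at $L_j$ and $U_{j+1}$ (they commute). The chain $\Theta$ has transitions $x\to\sigma_jx$, $j=0,\dots,n$, of rate $1$ for $j\in\{0,n\}$ and $2$ for $0<j<n$. For $J\subseteq[n]$: starting from one particle of each class $1,\dots,n$, identify classes $j,j+1$ for each $j\in J\setminus\{n\}$, remove class $n$ if $n\in J$, renumber; the resulting counts form the type $\mathbf m_J$ and $\Omega_J$ is the set of states of type $\mathbf m_J$; $\Theta_J$ is $\Theta$ restricted to $\Omega_J$. For $i\notin J$, $\varphi_i:\Omega_J\to\Omega_{J'}$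 ($J'=J\cup\{i\}$) merges the two classes separated at $i$ if $i<n$, or removes all particles of the largest class if $i=n$, then renumbers. Transition matrix convention: $M_J$ is the $\Omega_J\times\Omega_J$ matrix whose $(x,y)$ entry is the total rate of all transitions of $\Theta_J$ from $y$ to $x$ (including transitions $y\to y$); with this convention the stationary distribution $\pi_J$ satisfies $M_J\pi_J=2n\,\pi_J$. *)

(* Type C TASEP, 0-indexed encoding. *)
From mathcomp Require Import all_boot.

Set Implicit Arguments.
Unset Strict Implicit.
Unset Printing Implicit Defensive.

(* Column j : 'I_n stands for column j+1; a site is (column, is_upper):
   (j, true) = U_{j+1}, (j, false) = L_{j+1}.
   A class c : 'I_n stands for class c+1 (same order). *)
Definition site (n : nat) := ('I_n * bool)%type.

(* A (possibly invalid) configuration: contents of each site. *)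
Definition state (n : nat) := {ffun site n -> option 'I_n}.

Definition succ_site n (s : site n) : site n :=
  let: (j, up) := s in
  if up then (if 0 < val j then (insubd j j.-1, true) else (j, false))
  else (if j.+1 < n then (insubd j j.+1, false) else (j, true)).

Definition swap_sites n (s t : site n) (x : state n) : state n :=
  [ffun r => if r == s then x t else if r == t then x s else x r].

Definition bell n (s : site n) (x : state n) : state n :=
  let t := succ_site s in
  match x s with
  | Some p =>
      match x t with
      | None => swap_sites s t x
      | Some q => if p < q then swap_sites s t x else x
      end
  | None => x
  end.

Definition bellN n (c : nat) (up : bool) (x : state n) : state n :=
  if @insub nat (fun k => k < n) _ c is Some o then bell (o, up) x else x.

Definition sigma n (j : nat) (x : state n) : state n :=
  if j == 0 then bellN 0 true x
  else if j == n then bellN n.-1 false x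
  else bellN j.-1 false (bellN j true x).           (* bells at L_j, U_{j+1} *)

Definition rate n (j : nat) : nat := if (j == 0) || (j == n) then 1 else 2.

(* J : {set 'I_n}, where j : 'I_n stands for j+1 in [n]. *)

(* number of j in [1, m] (1-indexed) with j not in J *)
Definition cnt n (J : {set 'I_n}) (m : nat) : nat :=
  #|[set j : 'I_n | (j < m) && (j \notin J)]|.

(* n \in J *)
Definition lastInJ n (J : {set 'I_n}) : bool :=
  [exists l : 'I_n, (val l == n.-1) && (l \in J)].

(* the (renumbered) class of the original particle of class k+1 after
   identifying k', k'+1 for k' in J\{n} and removing the class containing n
   if n in J; None = removed *)
Definition cls n (J : {set 'I_n}) (k : 'I_n) : option 'I_n :=
  if lastInJ J && (cnt J k == cnt J n.-1) then None
  else Some (insubd k (cnt J k)).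

Definition mtype n (J : {set 'I_n}) (c : 'I_n) : nat :=
  #|[set k : 'I_n | cls J k == Some c]|.

Definition Omega n (J : {set 'I_n}) : {set state n} :=
  [set x : state n |
     [forall j : 'I_n, ~~ ((x (j, true) != None) && (x (j, false) != None))]
  && [forall c : 'I_n, #|[set s : site n | x s == Some c]| == mtype J c]].

(* M_J(x,y) = total rate of transitions y -> x of Theta_J *)
Definition Mmat n (J : {set 'I_n}) (x y : state n) : nat :=
  if (x \in Omega J) && (y \in Omega J) then
    \sum_(j < n.+1) rate n j * (sigma j y == x)
  else 0.

Definition relabel n (J : {set 'I_n}) (i : 'I_n) (a : 'I_n) : option 'I_n :=
  if i.+1 < n then
    (* i < n (1-indexed): merge the J-classes of i and i+1.  If the class
       of i+1 is the removed one (n \in J), merging with it means removal. *)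
    if lastInJ J && (cnt J i.+1 == cnt J n.-1) then
      (if val a == cnt J i then None else Some a)
    else Some (if a <= cnt J i then a else insubd a a.-1)
  else
    (* i = n: remove the largest class (the class of n) *)
    if val a == cnt J i then None else Some a.

Definition phi n (J : {set 'I_n}) (i : 'I_n) (x : state n) : state n :=
  [ffun s => obind (relabel J i) (x s)].

Definition Dmat n (J : {set 'I_n}) (i : 'I_n) (v u : state n) : nat :=
  if (v \in Omega (J :|: [set i])) && (u \in Omega J) then (v == phi J i u : nat)
  else 0.

(* The map [phi_i] relabels classes by a function that is monotone on the
   classes actually present, when an empty site is read as a particle of
   class +oo.  A bell only compares the two contents it touches, and such a
   relabelling either preserves the outcome of that comparison or makes the
   two contents equal, so [phi_i] commutes with every bell and hence with
   every [sigma_j].  As the [sigma_j] also preserve each state space [Omega],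
   both sides of the identity count, for every [j], the transition
   [phi_i u -> sigma_j (phi_i u)] with the rate of [sigma_j]. *)

From mathcomp Require Import all_boot perm zify.

Set Implicit Arguments.
Unset Strict Implicit.
Unset Printing Implicit Defensive.

Section Bells.
Variable n : nat.
Implicit Types (x y : state n) (s t r : site n) (a b : option 'I_n).

Definition jumps a b : bool :=
  match a, b with
  | Some p, None => true
  | Some p, Some q => p < q
  | None, _ => false
  end.

Definition bell_step a b : option 'I_n * option 'I_n :=
  if jumps a b then (b, a) else (a, b).

Lemma swap_sitesE s t x r : swap_sites s t x r = x (tperm s t r).
Proof.
rewrite ffunE; case: tpermP => [->|->|/eqP/negbTE-> /eqP/negbTE->]; rewrite ?eqxx //.
by case: eqP => // ->.
Qed.

Lemma bell_swap s x :
  bell s x = if jumps (x s) (x (succ_site s)) then swap_sites s (succ_site s) x else x.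
Proof. by rewrite /bell; case: (x s) => [p|] //=; case: (x _). Qed.

Lemma bellE s x r :
  bell s x r = let t := succ_site s in
    if r == s then (bell_step (x s) (x t)).1
    else if r == t then (bell_step (x s) (x t)).2 else x r.
Proof.
rewrite bell_swap /bell_step /=; case: ifP => _; last first.
  by case: eqP => [->|_] //; case: eqP => [->|].
rewrite swap_sitesE; case: tpermP => [->|->|/eqP/negbTE-> /eqP/negbTE->] //.
  by rewrite eqxx.
by rewrite eqxx; case: eqP => // ->.
Qed.

Definition class_count x (c : 'I_n) := #|[set r | x r == Some c]|.

Lemma class_count_bell s x c : class_count (bell s x) c = class_count x c.
Proof.
rewrite bell_swap; case: ifP => // _.
rewrite /class_count.
rewrite -(card_preimset [set r | x r == Some c] (@perm_inj _ (tperm s (succ_site s)))).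
by apply: eq_card => r; rewrite !inE swap_sitesE.
Qed.

Lemma class_count_bellN k up x c : class_count (bellN k up x) c = class_count x c.
Proof. by rewrite /bellN; case: insubP => // o _ _; apply: class_count_bell. Qed.

Lemma class_count_sigma j x c : class_count (sigma j x) c = class_count x c.
Proof. by rewrite /sigma; do 2?case: ifP => _; rewrite ?class_count_bellN. Qed.

Definition col_free a b : bool := ~~ ((a != None) && (b != None)).

Definition one_per_column x : bool :=
  [forall k : 'I_n, col_free (x (k, true)) (x (k, false))].

Lemma OmegaE (J : {set 'I_n}) x :
  x \in Omega J = one_per_column x && [forall c, class_count x c == mtype J c].
Proof. by rewrite inE. Qed.

Lemma col_freeC a b : col_free a b = col_free b a.
Proof. by rewrite /col_free andbC. Qed.

Lemma one_per_column_bell_vertical s x :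
  succ_site s = (s.1, ~~ s.2) -> one_per_column x -> one_per_column (bell s x).
Proof.
case: s => k up hs /forallP hx; apply/forallP => k'.
rewrite !bellE hs /= !xpair_eqE; case: (eqVneq k' k) => [->|_] /=; last exact: hx.
have := hx k; rewrite /bell_step.
by case: up {hs}; case: jumps => //=; rewrite col_freeC.
Qed.

(* The first bell only reads and writes upper sites and the second only lower
   ones, so their effect on columns [p] and [q] is a check on four contents. *)
Lemma col_free_bell_steps a b c d :
  col_free a d -> col_free b c ->
  col_free (bell_step a b).1 (bell_step c d).2 /\
  col_free (bell_step a b).2 (bell_step c d).1.
Proof.
by rewrite /bell_step; case: a => [?|]; case: b => [?|]; case: c => [?|];
  case: d => [?|] //=; case: ltnP.
Qed.

Lemma one_per_column_two_bells (p q : 'I_n) x : p != q ->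
  succ_site (p, true) = (q, true) -> succ_site (q, false) = (p, false) ->
  one_per_column x -> one_per_column (bell (q, false) (bell (p, true) x)).
Proof.
move=> pq h1 h2 /forallP hx; apply/forallP => k.
have := col_free_bell_steps (hx p) (hx q).
rewrite !bellE h1 h2 /= !bellE h1 /= !xpair_eqE -[true == false]/false.
rewrite -[false == true]/false !eqxx !andbT !andbF /=.
case: (eqVneq k p) => [->|kp]; first by rewrite (negbTE pq) => -[].
case: (eqVneq k q) => [_ [_]|_ _]; [by rewrite col_freeC | exact: hx].
Qed.

Lemma bellN_ord (o : 'I_n) up x : bellN o up x = bell (o, up) x.
Proof. by rewrite /bellN valK. Qed.

Lemma one_per_column_sigma j x :
  j <= n -> one_per_column x -> one_per_column (sigma j x).
Proof.
move=> jn hx; rewrite /sigma.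
case: ifP => [_|/negbT j0].
  rewrite /bellN; case: insubP => [o _ o0|] //.
  by apply: one_per_column_bell_vertical hx; rewrite /= o0.
case: ifP => [_|/negbT jn'].
  rewrite /bellN; case: insubP => [o _ on|] //.
  apply: one_per_column_bell_vertical hx.
  by rewrite /= on prednK ?ltnn // (leq_ltn_trans _ (ltn_ord o)).
have jlt : j < n by rewrite ltn_neqAle jn' jn.
have j1lt : j.-1 < n by lia.
rewrite (bellN_ord (Ordinal jlt)) (bellN_ord (Ordinal j1lt)).
apply: one_per_column_two_bells => //=.
- by rewrite -(inj_eq val_inj) /=; lia.
- by rewrite lt0n j0; congr (_, _); apply: val_inj; rewrite val_insubd j1lt.
- by rewrite prednK ?lt0n // jlt; congr (_, _); apply: val_inj; rewrite val_insubd jlt.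
Qed.

Lemma sigma_OmegaE (J : {set 'I_n}) j x : j <= n -> one_per_column x ->
  (sigma j x \in Omega J) = (x \in Omega J).
Proof.
move=> jn hx; rewrite !OmegaE one_per_column_sigma // hx.
by apply: eq_forallb => c; rewrite class_count_sigma.
Qed.

Lemma Omega_one_per_column (J : {set 'I_n}) x : x \in Omega J -> one_per_column x.
Proof. by rewrite OmegaE => /andP[]. Qed.

Lemma sigma_Omega (J : {set 'I_n}) j x : j <= n -> x \in Omega J -> sigma j x \in Omega J.
Proof. by move=> jn hx; rewrite sigma_OmegaE // (Omega_one_per_column hx). Qed.

End Bells.

Section Relabelling.
Variable n : nat.
Implicit Types (x : state n) (a b : option 'I_n).

(* An empty site is compared as a particle of class +oo. *)
Definition class_le a b : bool :=
  match a, b with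
  | _, None => true
  | None, Some _ => false
  | Some p, Some q => p <= q
  end.

Definition below (K : nat) a : bool := if a is Some c then c <= K else true.

Definition monotone_upto (K : nat) (f : 'I_n -> option 'I_n) :=
  forall c d : 'I_n, c <= d -> d <= K -> class_le (f c) (f d).

Lemma jumps_obind f K a b : monotone_upto K f -> below K a -> below K b ->
  jumps (obind f a) (obind f b) != jumps a b -> obind f a = obind f b.
Proof.
move=> mf; case: a => [p|] //=; case: b => [q|] //= hp hq; last by case: (f p).
have fpq := mf p q; have fqp := mf q p.
case: (f p) fpq fqp => [c|]; case: (f q) => [d|] //= fpq fqp;
  case: (ltnP p q) => pq //=.
all: try by have := fqp pq hp.
all: try by have := fpq (ltnW pq) hq.
- rewrite eqb_id -leqNgt => dc; congr Some; apply/val_inj/eqP.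
  by rewrite eqn_leq dc fpq // ltnW.
- by rewrite eqbF_neg ltnNge fqp.
Qed.

Lemma bell_step_obind f K a b : monotone_upto K f -> below K a -> below K b ->
  (obind f (bell_step a b).1, obind f (bell_step a b).2)
  = bell_step (obind f a) (obind f b).
Proof.
move=> mf ha hb; rewrite /bell_step.
have [->|] := eqVneq (jumps (obind f a) (obind f b)) (jumps a b); first by case: jumps.
move/(jumps_obind mf ha hb) => fab.
by case: (jumps a b); rewrite /= fab; case: jumps.
Qed.

Definition map_classes f x : state n := [ffun r => obind f (x r)].

Definition classes_below K x := forall r, below K (x r).

Lemma classes_below_bell K s x : classes_below K x -> classes_below K (bell s x).
Proof. by move=> hx r; rewrite bell_swap; case: ifP => _; rewrite ?swap_sitesE. Qed.

Lemma map_classes_bell f K s x : monotone_upto K f -> classes_below K x ->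
  map_classes f (bell s x) = bell s (map_classes f x).
Proof.
move=> mf hx; apply/ffunP => r; rewrite ffunE !bellE /= !ffunE.
rewrite -(bell_step_obind mf (hx s) (hx (succ_site s))) /=.
by do 2?case: ifP.
Qed.

Lemma map_classes_sigma f K j x : monotone_upto K f -> classes_below K x ->
  map_classes f (sigma j x) = sigma j (map_classes f x).
Proof.
move=> mf hx; have bellN_map k up y : classes_below K y ->
    map_classes f (bellN k up y) = bellN k up (map_classes f y).
  by rewrite /bellN => hy; case: insubP => // o _ _; apply: map_classes_bell mf hy.
have bellN_below k up y : classes_below K y -> classes_below K (bellN k up y).
  by rewrite /bellN => hy; case: insubP => // o _ _; apply: classes_below_bell.
by rewrite /sigma; do 2?case: ifP => _; rewrite ?bellN_map //; apply: bellN_below.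
Qed.

Lemma one_per_column_map_classes f x :
  one_per_column x -> one_per_column (map_classes f x).
Proof.
move=> /forallP hx; apply/forallP => k; rewrite !ffunE; move: (hx k).
by case: (x (k, true)) => [?|]; case: (x (k, false)) => [?|] //=; case: (f _).
Qed.

End Relabelling.

Section Projection.
Variables (n : nat) (J : {set 'I_n}).
Implicit Types (u v y : state n).

Lemma cnt_mono m m' : m <= m' -> cnt J m <= cnt J m'.
Proof.
move=> mm; apply: subset_leq_card; apply/subsetP => j; rewrite !inE.
by case/andP => jm ->; rewrite (leq_trans jm mm).
Qed.

Lemma cnt_lt (k : 'I_n) : cnt J k < n.
Proof.
apply: (@leq_ltn_trans #|[set~ k]|).
  apply: subset_leq_card; apply/subsetP => j; rewrite !inE => /andP[jk _].
  by apply: contraTneq jk => ->; rewrite ltnn.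
by rewrite cardsC1 card_ord prednK // (leq_ltn_trans _ (ltn_ord k)).
Qed.

Lemma Omega_class u r c : u \in Omega J -> u r = Some c ->
  exists2 k : 'I_n, ~~ (lastInJ J && (cnt J k == cnt J n.-1)) & val c = cnt J k.
Proof.
rewrite inE => /andP[_ /forallP/(_ c)/eqP hc] hr.
have : 0 < mtype J c by rewrite -hc card_gt0; apply/set0Pn; exists r; rewrite inE hr.
rewrite card_gt0 => /set0Pn[k]; rewrite inE /cls.
case: ifP => // removed /eqP[<-]; exists k; first by rewrite removed.
by rewrite val_insubd cnt_lt.
Qed.

Lemma monotone_upto_drop K :
  monotone_upto K (fun c : 'I_n => if val c == K then None else Some c).
Proof.
move=> c d cd dK; case: (eqVneq (val d) K) => [_|dK']; first by case: ifP.
by rewrite ifF //; apply/negbTE; rewrite neq_ltn (leq_ltn_trans cd) // ltn_neqAle dK' dK.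
Qed.

Lemma relabel_monotone i u : u \in Omega J ->
  exists K, monotone_upto K (relabel J i) /\ classes_below K u.
Proof.
move=> hu; rewrite /relabel; have [hi|hi] := boolP (i.+1 < n); last first.
  exists (cnt J i); split; first exact: monotone_upto_drop.
  move=> r; case hr: (u r) => [c|] //=; have [k _ ->] := Omega_class hu hr.
  by apply: cnt_mono; rewrite -ltnS (leq_trans (ltn_ord k)) // leqNgt.
have [/andP[lastJ /eqP top]|merged] := boolP (lastInJ J && (cnt J i.+1 == cnt J n.-1)).
  exists (cnt J i); split; first exact: monotone_upto_drop.
  move=> r; case hr: (u r) => [c|] //=; have [k kept ->] := Omega_class hu hr.
  case: (leqP k i) => [|ik]; first exact: cnt_mono.
  have : cnt J k <= cnt J n.-1.
    by apply: cnt_mono; rewrite -ltnS prednK ?(ltn_ord k) //; lia.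
  by have := cnt_mono ik; move: kept; rewrite lastJ top /=; lia.
exists n; split=> [c d cd _ /=|r]; last by case: (u r) => [c|] //=; apply: ltnW.
have vpred (z : 'I_n) : val (insubd z z.-1) = z.-1.
  by rewrite val_insubd (leq_ltn_trans (leq_pred z)).
by do 2![case: ifP => ? /=]; rewrite ?vpred; lia.
Qed.

Lemma phi_sigma i j u : u \in Omega J -> phi J i (sigma j u) = sigma j (phi J i u).
Proof. by case/(relabel_monotone i) => K [mf hu]; apply: map_classes_sigma mf hu. Qed.

Lemma sum_Mmat y (F : state n -> nat) : y \in Omega J ->
  \sum_(w in Omega J) F w * Mmat J w y = \sum_(j < n.+1) rate n j * F (sigma j y).
Proof.
move=> hy; under eq_bigr => w hw do rewrite /Mmat hw hy /= big_distrr.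
rewrite exchange_big; apply: eq_bigr => j _ /=.
have hs : sigma j y \in Omega J by apply: sigma_Omega _ hy; exact: ltn_ord j.
rewrite (bigD1 _ hs) /= big1 ?addn0 => [|w /andP[_ ne]].
  by rewrite eqxx muln1 mulnC.
by rewrite eq_sym (negbTE ne) !muln0.
Qed.

Lemma Dmat_sigma i v u (j : 'I_n.+1) :
  v \in Omega (J :|: [set i]) -> u \in Omega J ->
  Dmat J i v (sigma j u) = (v == sigma j (phi J i u)).
Proof.
move=> hv hu; have hs : sigma j u \in Omega J.
  by apply: sigma_Omega _ hu; exact: ltn_ord j.
by rewrite /Dmat hv hs phi_sigma.
Qed.

Lemma sum_Dmat i u (F : state n -> nat) : u \in Omega J ->
  \sum_(w in Omega (J :|: [set i])) F w * Dmat J i w u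
  = if phi J i u \in Omega (J :|: [set i]) then F (phi J i u) else 0.
Proof.
move=> hu; case: ifP => hphi.
  rewrite (bigD1 (phi J i u)) //= big1 ?addn0 => [|w /andP[_ ne]].
    by rewrite /Dmat hphi hu eqxx muln1.
  by rewrite /Dmat (negbTE ne) andbC; case: (_ && _); rewrite muln0.
apply: big1 => w hw; rewrite /Dmat hw hu /=.
by case: eqP => [e|_]; [rewrite -e hw in hphi | rewrite muln0].
Qed.

End Projection.

Theorem proposition2 (n : nat) (J : {set 'I_n}) (i : 'I_n) :
  2 <= n -> i \notin J ->
  forall v u : state n,
    v \in Omega (J :|: [set i]) -> u \in Omega J ->
    \sum_(w in Omega J) Dmat J i v w * Mmat J w u
    = \sum_(w in Omega (J :|: [set i])) Mmat (J :|: [set i]) v w * Dmat J i w u.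
Proof.
move=> _ _ v u hv hu; rewrite sum_Mmat // sum_Dmat //.
have phi_col : one_per_column (phi J i u).
  exact: one_per_column_map_classes (Omega_one_per_column hu).
under eq_bigr => j _ do rewrite (Dmat_sigma _ hv hu).
case: ifP => [phi_in|phi_out].
  by rewrite /Mmat hv phi_in; apply: eq_bigr => j _; rewrite eq_sym.
apply: big1 => j _; case: eqP => [v_eq|]; last by rewrite muln0.
by move: hv; rewrite v_eq sigma_OmegaE ?phi_out //; exact: ltn_ord j.
Qed.
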